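(* Let $\mathcal{X} = \{x_1, \dots, x_N\}$ be a finite set and let $P_{\mathrm{coor}}$ be a symmetric joint probability distribution on $\mathcal{X} \times \mathcal{X}$ with marginal $P(x) = \sum_{x'} P_{\mathrm{coor}}(x, x')$, and assume $P_{\mathrm{coor}}(x_i,x_j) > 0$ for all $i,j$. Let $K \in \mathbb{R}^{N\times N}$ be the PMI matrix $K_{ij} = \log \frac{P_{\mathrm{coor}}(x_i, x_j)}{P(x_i)P(x_j)}$. Suppose there are $\rho_{\min} > 0$ and $\delta \ge 0$ with $[\log \rho_{\min}, \log \rho_{\min} + \delta] \subseteq (-\infty, 0]$ such that every off-diagonal entry satisfies $\log \rho_{\min} \le K_{ij} \le \log \rho_{\min} + \delta$ for $i \ne j$. If $$\frac{P_{\mathrm{coor}}(x_i, x_i)}{P(x_i)^2} \ge e^{N\delta} \rho_{\min} \quad \text{for all } i = 1,\dots,N,$$ then there exists a constant $C \in \mathbb{R}$ such that the matrix $K + C\,\mathbf{1}\mathbf{1}^\top$ (i.e. $C$ added to every entry of $K$) is positive semi-definite. Consequently there is a map $f : \mathcal{X} \to \mathbb{R}^N$ with $\langle f(x_a), f(x_b)\rangle = K_{\mathrm{PMI}}(x_a, x_b) + C$ for all $x_a, x_b \in \mathcal{X}$.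
   Context: $K_{\mathrm{PMI}}(x_a,x_b) = \log \frac{P_{\mathrm{coor}}(x_a, x_b)}{P(x_a)P(x_b)}$ denotes the pointwise mutual information kernel of the cooccurrence distribution $P_{\mathrm{coor}}$; $\mathbf{1}$ is the all-ones vector in $\mathbb{R}^N$. *)

From HB Require Import structures.
From mathcomp Require Import all_boot all_order all_algebra.
From mathcomp Require Import reals sequences exp.
Set Implicit Arguments. Unset Strict Implicit. Unset Printing Implicit Defensive.
Import Order.TTheory GRing.Theory Num.Theory.
Local Open Scope ring_scope.

Definition marginal (R : realType) (N : nat) (Pc : 'I_N -> 'I_N -> R) (i : 'I_N) : R :=
  \sum_(j < N) Pc i j.

Definition pmi_matrix (R : realType) (N : nat) (Pc : 'I_N -> 'I_N -> R) : 'M[R]_N :=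
  \matrix_(i < N, j < N) ln (Pc i j / (marginal Pc i * marginal Pc j)).

Definition ones (R : realType) (N : nat) : 'cV[R]_N := const_mx 1.

Definition psd (R : realType) (N : nat) (A : 'M[R]_N) : Prop :=
  forall v : 'cV[R]_N, 0 <= (v^T *m A *m v) 0 0.

Definition dotR (R : realType) (N : nat) (u v : 'rV[R]_N) : R :=
  \sum_(k < N) u 0 k * v 0 k.

From HB Require Import structures.
From mathcomp Require Import all_boot all_order all_algebra.
From mathcomp Require Import reals sequences exp.
From mathcomp Require Import ring lra.
Set Implicit Arguments. Unset Strict Implicit.
Import Order.TTheory GRing.Theory Num.Theory.
Local Open Scope ring_scope.

(* With C = - ln rho_min, the matrix A = K + C has off-diagonal entries in
   [0, delta] and diagonal entries at least N delta.  A symmetric matrix with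
   such entries is positive semi-definite: each off-diagonal term v_i A_ij v_j
   is at least -(delta/2)(v_i^2 + v_j^2), and the diagonal pays for all of
   them.  A positive semi-definite symmetric matrix is a Gram matrix, by the
   Cholesky-type induction that splits off the first coordinate and recurses
   on the Schur complement; the rows of the Gram factor give the map f. *)

Definition vcons (T : Type) n (t : T) (w : 'I_n -> T) : 'I_n.+1 -> T :=
  fun i => if unlift ord0 i is Some k then w k else t.

Lemma vcons0 (T : Type) n (t : T) (w : 'I_n -> T) : vcons t w ord0 = t.
Proof. by rewrite /vcons unlift_none. Qed.

Lemma vconsS (T : Type) n (t : T) (w : 'I_n -> T) k : vcons t w (lift ord0 k) = w k.
Proof. by rewrite /vcons liftK. Qed.

Section QuadraticForm.
Variable R : comNzRingType.

Definition qform n (A : 'I_n -> 'I_n -> R) (v : 'I_n -> R) : R :=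
  \sum_(i < n) \sum_(j < n) v i * A i j * v j.

Lemma eq_qform n (A B : 'I_n -> 'I_n -> R) v :
  (forall i j, A i j = B i j) -> qform A v = qform B v.
Proof. by move=> eqAB; apply: eq_bigr => i _; apply: eq_bigr => j _; rewrite eqAB. Qed.

Lemma sum_vconsM n (t t' : R) (w w' : 'I_n -> R) :
  \sum_(k < n.+1) vcons t w k * vcons t' w' k = t * t' + \sum_(k < n) w k * w' k.
Proof. by rewrite big_ord_recl !vcons0; under eq_bigr do rewrite !vconsS. Qed.

Lemma qform_vcons n (A : 'I_n.+1 -> 'I_n.+1 -> R) (t : R) (w : 'I_n -> R) :
  (forall i j, A i j = A j i) ->
  qform A (vcons t w) = t * A ord0 ord0 * t
     + 2 * t * (\sum_(j < n) A ord0 (lift ord0 j) * w j)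
     + qform (fun j k => A (lift ord0 j) (lift ord0 k)) w.
Proof.
move=> A_sym; rewrite /qform.
under eq_bigr => i _ do rewrite big_ord_recl.
rewrite big_ord_recl big_split /= !vcons0.
under eq_bigr => i _ do rewrite vconsS.
under [X in _ + (X + _) = _]eq_bigr => i _ do rewrite vconsS A_sym.
under [X in _ + (_ + X) = _]eq_bigr => i _ do under eq_bigr => j _ do rewrite !vconsS.
rewrite mulr_sumr !addrA; congr (_ + _); rewrite -addrA; congr (_ + _).
by rewrite -big_split /=; apply: eq_bigr => i _; ring.
Qed.

Lemma sum_mul_delta n (f : 'I_n -> R) j : \sum_(k < n) f k * (k == j)%:R = f j.
Proof.
rewrite (bigD1 j) //= eqxx mulr1 big1 ?addr0 // => k /negbTE ->.
by rewrite mulr0.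
Qed.

Lemma qform_delta n (A : 'I_n -> 'I_n -> R) j :
  qform A (fun k => (k == j)%:R) = A j j.
Proof.
rewrite /qform; under eq_bigr => i _ do rewrite sum_mul_delta mulrC.
exact: (sum_mul_delta (fun i => A i j)).
Qed.

Lemma qform_mx n (M : 'M[R]_n) (v : 'cV[R]_n) :
  (v^T *m M *m v) 0 0 = qform (fun i j => M i j) (fun i => v i 0).
Proof.
rewrite mxE /qform; under eq_bigr => j _ do rewrite mxE big_distrl.
rewrite exchange_big /=; apply: eq_bigr => i _; apply: eq_bigr => j _.
by rewrite !mxE.
Qed.

End QuadraticForm.

Section DiagonallyDominant.
Variable R : realFieldType.

Lemma offdiag_term_ge (d a x y : R) : 0 <= a <= d ->
  - (d / 2 * x ^+ 2) - d / 2 * y ^+ 2 <= x * a * y.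
Proof.
case/andP=> a_ge0 a_le_d.
have e1 : 0 <= a * (x + y) ^+ 2 by rewrite mulr_ge0 ?sqr_ge0.
have e2 : 0 <= (d - a) * (x ^+ 2 + y ^+ 2).
  by apply: mulr_ge0; rewrite ?subr_ge0 ?addr_ge0 ?sqr_ge0.
nra.
Qed.

Lemma qform_ge0_dominant n (A : 'I_n -> 'I_n -> R) (d : R) : 0 <= d ->
  (forall i j, i != j -> 0 <= A i j <= d) ->
  (forall i, n%:R * d <= A i i) -> forall v, 0 <= qform A v.
Proof.
move=> d_ge0 A_off A_diag v.
pose q := \sum_(i < n) v i ^+ 2.
(* the diagonal share (n + 1) d v_i^2 is set so that all terms sum to d q *)
pose g i j := (i == j)%:R * ((n%:R + 1) * d * v i ^+ 2)
   - d / 2 * v i ^+ 2 - d / 2 * v j ^+ 2.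
have g_le : \sum_(i < n) \sum_(j < n) g i j <= qform A v.
  apply: ler_sum => i _; apply: ler_sum => j _; rewrite /g.
  have [<-|ij] := eqVneq i j; last by rewrite mul0r add0r offdiag_term_ge ?A_off.
  by rewrite mul1r; have := A_diag i; nra.
have g_sum : \sum_(i < n) \sum_(j < n) g i j = d * q.
  rewrite /g; under eq_bigr => i _.
    rewrite !sumrB (bigD1 i) //= eqxx mul1r big1 ?addr0; last first.
      by move=> j; rewrite eq_sym => /negbTE ->; rewrite mul0r.
    by rewrite sumr_const card_ord over.
  rewrite !sumrB sumr_const card_ord -!sumrMnl -!mulr_sumr -/q.
  by rewrite sumrMnl -mulr_sumr -/q -[d / 2 * q *+ n]mulr_natr; field.
by apply: le_trans g_le; rewrite g_sum mulr_ge0 // sumr_ge0 // => i _; apply: sqr_ge0.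
Qed.

End DiagonallyDominant.

Section SchurComplement.
Variables (R : rcfType) (n : nat) (A : 'I_n.+1 -> 'I_n.+1 -> R).
Hypothesis A_sym : forall i j, A i j = A j i.
Hypothesis A_psd : forall v, 0 <= qform A v.

Definition corner := A ord0 ord0.
Definition first_row j := A ord0 (lift ord0 j).
Definition minor j k := A (lift ord0 j) (lift ord0 k).
Definition schur j k := minor j k - first_row j * first_row k / corner.

Lemma qform_vcons_corner t w :
  qform A (vcons t w) =
  t * corner * t + 2 * t * (\sum_(j < n) first_row j * w j) + qform minor w.
Proof. exact: qform_vcons. Qed.

Lemma corner_ge0 : 0 <= corner.
Proof.
have := A_psd (vcons 1 (fun _ => 0)); rewrite qform_vcons_corner.
rewrite big1 ?mulr0 ?addr0; last by move=> j _; rewrite mulr0.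
rewrite /qform big1 ?addr0 ?mul1r ?mulr1 //.
by move=> i _; rewrite big1 // => j _; rewrite !mul0r.
Qed.

(* Otherwise a vector supported on 0 and j makes the form linear in the
   first coordinate, hence negative somewhere. *)
Lemma first_row_eq0 : corner = 0 -> forall j, first_row j = 0.
Proof.
move=> c0 j; apply/eqP/negPn/negP => bj.
pose c := minor j j.
have c_ge0 : 0 <= c.
  have := A_psd (vcons 0 (fun k => (k == j)%:R)).
  by rewrite qform_vcons_corner qform_delta !mulr0 !mul0r !add0r.
have := A_psd (vcons (- (c + 1) / (2 * first_row j)) (fun k => (k == j)%:R)).
rewrite qform_vcons_corner qform_delta sum_mul_delta c0 mulr0 mul0r add0r.
have -> : 2 * (- (c + 1) / (2 * first_row j)) * first_row j = - (c + 1).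
  by field; rewrite bj /=; lra.
rewrite -/c; lra.
Qed.

Lemma schur_sym j k : schur j k = schur k j.
Proof. by rewrite /schur /minor A_sym [first_row j * _]mulrC. Qed.

(* The Schur complement is the form of A restricted to the vectors that
   minimise it in the first coordinate. *)
Lemma qform_schur w :
  qform schur w = qform A (vcons (- (\sum_(j < n) first_row j * w j) / corner) w).
Proof.
set s := \sum_(j < n) first_row j * w j.
have -> : qform schur w = qform minor w - s * s / corner.
  rewrite /qform /schur.
  rewrite [X in _ - X](_ : _ = \sum_(i < n) \sum_(j < n)
      w i * (first_row i * first_row j / corner) * w j).
    by rewrite -sumrB; apply: eq_bigr => i _; rewrite -sumrB;
       apply: eq_bigr => k _; ring.
  rewrite -mulrA big_distrl /=; apply: eq_bigr => i _.
  by rewrite big_distrl /= big_distrr /=; apply: eq_bigr => k _; ring.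
rewrite qform_vcons_corner -/s.
have [c0|c0] := eqVneq corner 0; last by field.
have -> : s = 0 by rewrite /s big1 // => j _; rewrite first_row_eq0 // mul0r.
by rewrite c0; ring.
Qed.

Lemma schur_psd w : 0 <= qform schur w.
Proof. by rewrite qform_schur. Qed.

Lemma sqrt_corner_mulK j : Num.sqrt corner * (first_row j / Num.sqrt corner) = first_row j.
Proof.
have [c0|c0] := eqVneq corner 0; first by rewrite first_row_eq0 // !mul0r mulr0.
by rewrite mulrC mulrVK // unitfE sqrtr_eq0 -ltNge lt_def c0 corner_ge0.
Qed.

End SchurComplement.

Lemma psd_gram (R : rcfType) n (A : 'I_n -> 'I_n -> R) :
  (forall i j, A i j = A j i) -> (forall v, 0 <= qform A v) ->
  exists F : 'I_n -> 'I_n -> R, forall a c, \sum_(k < n) F a k * F c k = A a c.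
Proof.
elim: n A => [|n IH] A A_sym A_psd; first by exists (fun _ _ => 0) => -[].
have [G HG] := IH _ (schur_sym A_sym) (schur_psd A_sym A_psd).
pose r := Num.sqrt (corner A).
pose x := vcons r (fun j => first_row A j / r).
exists (fun a => vcons (x a) (vcons (fun _ => 0) G a)) => a c.
have rr : r * r = corner A by rewrite -expr2 sqr_sqrtr ?corner_ge0.
rewrite sum_vconsM /x.
case: (unliftP ord0 a) => [j ->|->]; rewrite ?vcons0 ?vconsS;
case: (unliftP ord0 c) => [k ->|->]; rewrite ?vcons0 ?vconsS.
- rewrite HG /schur mulrACA -invfM rr /minor; ring.
- rewrite big1 ?addr0; last by move=> i _; rewrite mulr0.
  by rewrite mulrC sqrt_corner_mulK // A_sym.
- rewrite big1 ?addr0; last by move=> i _; rewrite mul0r.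
  exact: sqrt_corner_mulK.
- by rewrite big1 ?addr0 // => i _; rewrite mul0r.
Qed.

Lemma pmi_matrix_sym (R : realType) N (Pc : 'I_N -> 'I_N -> R) :
  (forall i j, Pc i j = Pc j i) -> forall i j, pmi_matrix Pc i j = pmi_matrix Pc j i.
Proof. by move=> Pc_sym i j; rewrite !mxE Pc_sym [marginal Pc i * _]mulrC. Qed.

Theorem mainTheorem1 (R : realType) (N : nat) (Pc : 'I_N -> 'I_N -> R)
  (rho_min delta : R)
  (Pc_pos : forall i j, 0 < Pc i j)
  (Pc_sym : forall i j, Pc i j = Pc j i)
  (Pc_sum1 : \sum_(i < N) \sum_(j < N) Pc i j = 1)
  (rho_pos : 0 < rho_min)
  (delta_ge0 : 0 <= delta)
  (interval_nonpos : ln rho_min + delta <= 0)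
  (offdiag_bounds : forall i j : 'I_N, i != j ->
      ln rho_min <= pmi_matrix Pc i j <= ln rho_min + delta)
  (diag_bound : forall i : 'I_N,
      expR (N%:R * delta) * rho_min <= Pc i i / (marginal Pc i ^+ 2)) :
  exists C : R,
    psd (pmi_matrix Pc + C *: (ones R N *m (ones R N)^T)) /\
    exists f : 'I_N -> 'rV[R]_N,
      forall a b : 'I_N, dotR (f a) (f b) = pmi_matrix Pc a b + C.
Proof.
pose C := - ln rho_min; pose A i j := pmi_matrix Pc i j + C.
have A_sym i j : A i j = A j i by rewrite /A pmi_matrix_sym.
have A_off i j : i != j -> 0 <= A i j <= delta.
  by move/offdiag_bounds/andP=> [lo hi]; apply/andP; rewrite /A /C; split; lra.
have A_diag i : N%:R * delta <= A i i.
  have lb_gt0 : 0 < expR (N%:R * delta) * rho_min by rewrite mulr_gt0 ?expR_gt0.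
  have := diag_bound i; rewrite -ler_ln ?posrE // ?(lt_le_trans lb_gt0) //.
  rewrite lnM ?posrE ?expR_gt0 // expRK /A /C mxE expr2; lra.
have A_psd := qform_ge0_dominant delta_ge0 A_off A_diag.
have [F HF] := psd_gram A_sym A_psd.
exists C; split=> [v|].
  rewrite qform_mx (@eq_qform _ _ _ A) // => i j.
  by rewrite /A !mxE big_ord1 !mxE !mulr1.
exists (fun a => \row_k F a k) => a b.
by rewrite /dotR; under eq_bigr => k _ do rewrite !mxE; exact: HF.
Qed.
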